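(* For every $T_D$-algebra $M$, the space $\mathrm{at}\,M$ is homeomorphic to $\mathrm{pt}_D\mathcal O M$.
   Context: An MT-algebra is a pair $(M,\square)$ where $M$ is a complete boolean algebra and $\square:M\to M$ satisfies $\square 1=1$, $\square(a\wedge b)=\square a\wedge\square b$, $\square a\le a$, $\square a\le\square\square a$; $\Diamond a=\neg\square\neg a$; open: $\square a=a$; locally closed: $a=\square b\wedge\Diamond c$ for some $b,c$. $\mathcal O M$ is the frame of open elements. $M$ is a $T_D$-algebra if every element is a join of locally closed elements. $\mathrm{at}\,M$ is the set of atoms of $M$ with topology $\{\eta_M(u):u\in\mathcal O M\}$ where $\eta_M(a)=\{x\in\mathrm{at}\,M:x\le a\}$. For a frame $L$ and elements $a<b$, $a\lessdot b$ means no $x$ with $a<x<b$; a filter $F$ of $L$ is slicing if it is prime and there are $b\in F$, $a\notin F$ with $a\lessdot b$; $\mathrm{pt}_D L$ is the set of slicing filters topologized by the opens $\{F: a\in F\}$, $a\in L$. *)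

(* complete boolean algebras as complete ctbDistrLattices. *)
From mathcomp Require Import all_boot all_order.
Import Order.TTheory.
Set Implicit Arguments. Unset Strict Implicit. Unset Printing Implicit Defensive.
Local Open Scope order_scope.

Section Defs.
Context {d : Order.disp_t} {M : ctbDistrLatticeType d}.

Definition is_lub (A : M -> Prop) (s : M) : Prop :=
  (forall x, A x -> x <= s) /\ (forall u, (forall x, A x -> x <= u) -> s <= u).

Definition complete_lattice : Prop := forall A : M -> Prop, exists s, is_lub A s.

Definition MT_axioms (box : M -> M) : Prop :=
  [/\ box \top = \top,
      (forall a b, box (a `&` b) = box a `&` box b),
      (forall a, box a <= a) &
      (forall a, box a <= box (box a))].

Definition dia (box : M -> M) (a : M) : M := ~` box (~` a).
Definition is_open (box : M -> M) (a : M) : Prop := box a = a.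
Definition locally_closed (box : M -> M) (a : M) : Prop :=
  exists b c, a = box b `&` dia box c.

Definition TD_algebra (box : M -> M) : Prop :=
  forall a, exists A : M -> Prop,
    (forall x, A x -> locally_closed box x) /\ is_lub A a.

Definition atom (x : M) : Prop :=
  \bot < x /\ forall y, y <= x -> y = \bot \/ y = x.

Definition atomT := {x : M | atom x}.

Definition at_open (box : M -> M) (U : atomT -> Prop) : Prop :=
  exists u, is_open box u /\ forall x : atomT, U x <-> proj1_sig x <= u.

(* The frame O M is the set of open elements of M with the induced order;
   its finite meets and binary joins are those of M.  Subsets of O M are
   represented as predicates F on M with F a -> is_open box a. *)
Definition covered (box : M -> M) (a b : M) : Prop :=
  [/\ is_open box a, is_open box b, a < b &
      ~ exists x, [/\ is_open box x, a < x & x < b]].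

Definition filter_OM (box : M -> M) (F : M -> Prop) : Prop :=
  [/\ (forall a, F a -> is_open box a),
      F \top,
      (forall a b, F a -> is_open box b -> a <= b -> F b) &
      (forall a b, F a -> F b -> F (a `&` b))].

Definition prime_filter_OM (box : M -> M) (F : M -> Prop) : Prop :=
  [/\ filter_OM box F, ~ F \bot &
      (forall a b, is_open box a -> is_open box b -> F (a `|` b) -> F a \/ F b)].

Definition slicing (box : M -> M) (F : M -> Prop) : Prop :=
  prime_filter_OM box F /\
  exists a b, [/\ F b, ~ F a & covered box a b].

Definition ptD (box : M -> M) := {F : M -> Prop | slicing box F}.

Definition ptD_open (box : M -> M) (V : ptD box -> Prop) : Prop :=
  exists a, is_open box a /\ forall F : ptD box, V F <-> proj1_sig F a.

End Defs.

Definition homeomorphic {X Y : Type} (OX : (X -> Prop) -> Prop)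
  (OY : (Y -> Prop) -> Prop) : Prop :=
  exists f : X -> Y,
    [/\ bijective f,
        (forall V, OY V -> OX (fun x => V (f x))) &
        (forall U, OX U -> OY (fun y => exists2 x, U x & f x = y))].

From mathcomp Require Import all_boot all_order.
From Stdlib Require Import Classical ClassicalEpsilon.
From Stdlib Require Import FunctionalExtensionality PropExtensionality ProofIrrelevance.
Import Order.Theory.
Set Implicit Arguments. Unset Strict Implicit. Unset Printing Implicit Defensive.
Local Open Scope order_scope.

(* The homeomorphism sends an atom x to the filter of open elements above x.
   The T_D axiom makes every atom locally closed, x = u /\ <>c with u open;
   then a = u /\ []~c is open, disjoint from x, and u = x \/ a, so a is covered
   by u in O M and that filter is slicing.  Conversely, if a prime filter of
   O M separates a covering pair a < b of opens, the difference x = b /\ ~a is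
   decided by every open v (x <= v or x /\ v = 0, according as a \/ (b /\ v)
   is b or a); so a nonzero locally closed element below x must be x, and by
   T_D x is an atom whose filter of open neighbourhoods is the given one. *)

Lemma inj_surj_bijective (A B : Type) (f : A -> B) :
  injective f -> (forall y, exists x, f x = y) -> bijective f.
Proof.
move=> f_inj f_surj.
pose g y := proj1_sig (constructive_indefinite_description _ (f_surj y)).
have fgK : cancel g f.
  move=> y; exact: proj2_sig (constructive_indefinite_description _ (f_surj y)).
by exists g => // x; apply: f_inj; rewrite fgK.
Qed.

Lemma homeomorphic_basis (X Y I : Type) (P : I -> Prop)
    (inX : I -> X -> Prop) (inY : I -> Y -> Prop) (f : X -> Y) :
  bijective f -> (forall i x, P i -> inY i (f x) <-> inX i x) ->
  homeomorphic (fun U => exists i, P i /\ forall x, U x <-> inX i x)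
               (fun V => exists i, P i /\ forall y, V y <-> inY i y).
Proof.
move=> f_bij f_in; exists f; split => //.
  move=> V [i [Pi V_i]]; exists i; split => // x.
  by rewrite V_i; exact: f_in.
move=> U [i [Pi U_i]]; exists i; split => // y; split.
  by move=> [x Ux <-]; rewrite f_in // -U_i.
case: f_bij => g gK fK inY_y; exists (g y); last exact: fK.
by rewrite U_i -f_in // fK.
Qed.

Section Atoms.
Context {d : Order.disp_t} {M : ctbDistrLatticeType d}.
Implicit Types (x y a b : M) (A : M -> Prop).

Lemma lub_neq0 A s : is_lub A s -> s <> \bot -> exists z, A z /\ z <> \bot.
Proof.
move=> [_ s_least] s_neq0; apply: NNPP => no_z; apply: s_neq0; apply/eqP.
rewrite -lex0; apply: s_least => z Az; rewrite lex0; apply/eqP.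
by apply: NNPP => z_neq0; apply: no_z; exists z.
Qed.

Lemma le_meet_eq0 x a b : x <= a -> x <= b -> a `&` b = \bot -> x = \bot.
Proof. by move=> x_a x_b ab0; apply/eqP; rewrite -lex0 -ab0 lexI x_a x_b. Qed.

Lemma atom_neq0 x : atom x -> x <> \bot.
Proof. by case=> x_gt0 _ x0; rewrite x0 ltxx in x_gt0. Qed.

Lemma atom_le_eq x y : atom x -> atom y -> y <= x -> y = x.
Proof. by move=> [_ x_min] y_atom /x_min [/(atom_neq0 y_atom)|]. Qed.

Lemma atom_meet_eq0 x a : atom x -> ~ x <= a -> x `&` a = \bot.
Proof.
move=> [_ x_min] x_a; case: (x_min (x `&` a) (leIl _ _)) => // xa_x.
by case: x_a; rewrite -xa_x leIr.
Qed.

Lemma atom_leU x a b : atom x -> x <= a `|` b -> x <= a \/ x <= b.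
Proof.
move=> x_atom x_ab; apply: NNPP => /not_or_and[x_a x_b].
apply: (atom_neq0 x_atom).
by rewrite -(meet_l x_ab) meetUr !atom_meet_eq0 // joinxx.
Qed.

Lemma atom_joinr_cover x a w :
  atom x -> x `&` a = \bot -> a <= w -> w <= x `|` a -> w = a \/ w = x `|` a.
Proof.
move=> x_atom xa0 a_w w_xa.
case: (classic (x <= w)) => [x_w|x_w]; [right|left]; apply: le_anti.
  by rewrite w_xa leUx x_w a_w.
have wx0 : w `&` x = \bot by rewrite meetC atom_meet_eq0.
by rewrite a_w andbT -(disjoint_lexUr _ wx0).
Qed.

End Atoms.

Section MTAlgebra.
Context {d : Order.disp_t} {M : ctbDistrLatticeType d} (box : M -> M).
Hypothesis box_MT : MT_axioms box.
Implicit Types (x y a b v : M).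

Lemma box_le a : box a <= a.
Proof. by case: box_MT. Qed.

Lemma box_meet a b : box (a `&` b) = box a `&` box b.
Proof. by case: box_MT. Qed.

Lemma box_mono a b : a <= b -> box a <= box b.
Proof. by move=> ab; rewrite -(meet_l ab) box_meet leIr. Qed.

Lemma open_box a : is_open box (box a).
Proof. by apply: le_anti; rewrite box_le /=; case: box_MT. Qed.

Lemma open_top : is_open box \top.
Proof. by case: box_MT. Qed.

Lemma openI a b : is_open box a -> is_open box b -> is_open box (a `&` b).
Proof. by rewrite /is_open box_meet => -> ->. Qed.

Lemma openU a b : is_open box a -> is_open box b -> is_open box (a `|` b).
Proof.
move=> a_open b_open; apply: le_anti; rewrite box_le leUx.
by rewrite -{1}a_open -{2}b_open !box_mono ?leUl ?leUr.
Qed.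

Lemma box_meet_dia c : box (~` c) `&` dia box c = \bot.
Proof. exact: meetxC. Qed.

Definition open_nbhd x v := is_open box v /\ x <= v.

Section TD.
Hypothesis box_TD : TD_algebra box.

Lemma atom_locally_closed x :
  atom x -> exists u c, is_open box u /\ x = u `&` dia box c.
Proof.
move=> x_atom; case: (box_TD x) => A [A_lc A_lub].
have [z [Az z_neq0]] := lub_neq0 A_lub (atom_neq0 x_atom).
have [_ x_min] := x_atom; have [x_ub _] := A_lub.
have [/z_neq0[]|z_x] := x_min z (x_ub z Az).
have [p [c z_pc]] := A_lc z Az.
by exists (box p), c; rewrite -z_x z_pc; split; first exact: open_box.
Qed.

Lemma atom_open_diff x :
  atom x -> exists a, [/\ is_open box a, is_open box (x `|` a) & x `&` a = \bot].
Proof.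
move=> /atom_locally_closed [u [c [u_open ->]]].
exists (u `&` box (~` c)); split.
- by apply: openI => //; exact: open_box.
- by rewrite -meetUr /dia joinCx meetx1.
- by rewrite meetACA meetxx [X in _ `&` X]meetC box_meet_dia meetx0.
Qed.

Lemma slicing_open_nbhd x : atom x -> slicing box (open_nbhd x).
Proof.
move=> x_atom; have [a [a_open xa_open xa0]] := atom_open_diff x_atom.
have x_a : ~ x <= a.
  by move=> x_a; apply: (atom_neq0 x_atom); apply: le_meet_eq0 x_a xa0.
split; first split; first split.
- by move=> v [].
- by split; [exact: open_top | exact: lex1].
- by move=> v w [_ x_v] w_open v_w; split; last exact: le_trans v_w.
- move=> v w [v_open x_v] [w_open x_w].
  by split; [exact: openI | rewrite lexI x_v].
- by move=> [_]; rewrite lex0 => /eqP; exact: atom_neq0.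
- by move=> v w v_open w_open [_ /(atom_leU x_atom)[]]; [left|right].
exists a, (x `|` a); split; [by split; rewrite ?leUl | by case |].
split=> //.
  by rewrite lt_neqAle leUr andbT; apply/eqP => a_xa; rewrite a_xa leUl in x_a.
move=> [w [_ a_w w_xa]].
have [w_a|w_xa'] := atom_joinr_cover x_atom xa0 (ltW a_w) (ltW w_xa).
  by rewrite w_a ltxx in a_w.
by rewrite w_xa' ltxx in w_xa.
Qed.

Lemma open_nbhd_inj x y : atom x -> atom y -> open_nbhd x = open_nbhd y -> x = y.
Proof.
move=> x_atom y_atom xy_nbhd.
have [a [a_open xa_open xa0]] := atom_open_diff x_atom.
have [_ y_xa] : open_nbhd y (x `|` a) by rewrite -xy_nbhd; split; rewrite ?leUl.
have y_a : ~ y <= a.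
  move=> y_a; have [_] : open_nbhd x a by rewrite xy_nbhd.
  by move=> x_a; apply: (atom_neq0 x_atom); apply: le_meet_eq0 x_a xa0.
apply/esym/atom_le_eq => //.
by rewrite joinC (disjoint_lexUr _ (atom_meet_eq0 y_atom y_a)) in y_xa.
Qed.

End TD.

Section CoveringPair.
Variables a b : M.
Hypothesis ab_covered : covered box a b.
Let gap := b `&` ~` a.

Lemma covered_split v : is_open box v -> b `&` v <= a \/ a `|` (b `&` v) = b.
Proof.
case: ab_covered => a_open b_open /ltW a_b no_between v_open.
have abv_open : is_open box (a `|` (b `&` v)) by apply: openU => //; exact: openI.
have [abv_a|abv_neq_a] := eqVneq (a `|` (b `&` v)) a.
  by left; rewrite -abv_a leUr.
right; apply: le_anti; rewrite leUx a_b leIl /=.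
apply: NNPP => b_abv; apply: no_between; exists (a `|` (b `&` v)).
split=> //; first by rewrite lt_def abv_neq_a leUl.
rewrite lt_neqAle leUx a_b leIl !andbT.
by apply/eqP => abv_b; rewrite abv_b in b_abv.
Qed.

Lemma gap_neq0 : gap <> \bot.
Proof.
case: ab_covered => _ _ a_lt_b _ /eqP; rewrite disj_leC complK => b_a.
by move: (lt_le_trans a_lt_b b_a); rewrite ltxx.
Qed.

Lemma gap_le_of_split v : a `|` (b `&` v) = b -> gap <= v.
Proof.
move=> abv_b; have gap_a0 : gap `&` a = \bot by rewrite -meetA meetCx meetx0.
have : gap <= a `|` (b `&` v) by rewrite abv_b leIl.
by rewrite (disjoint_lexUr _ gap_a0) lexI => /andP[].
Qed.

Lemma gap_meet_eq0_of_le v : b `&` v <= a -> gap `&` v = \bot.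
Proof.
move=> bv_a; apply: (le_meet_eq0 (a := a) (b := ~` a)); last exact: meetxC.
  by rewrite meetAC (le_trans (leIl _ _) bv_a).
by rewrite meetAC leIr.
Qed.

Lemma gap_decide v : is_open box v -> gap <= v \/ gap `&` v = \bot.
Proof.
case/covered_split=> [/gap_meet_eq0_of_le|/gap_le_of_split]; by [right|left].
Qed.

Lemma locally_closed_le_gap l :
  locally_closed box l -> l <> \bot -> l <= gap -> l = gap.
Proof.
move=> [p [c ->]] l_neq0 l_gap; apply: le_anti; rewrite l_gap lexI.
have gap_p : gap <= box p.
  have [//|gap_p0] := gap_decide (open_box p); case: l_neq0.
  by apply: le_meet_eq0 l_gap (leIl _ _) gap_p0.
have gap_c0 : gap `&` box (~` c) = \bot.
  have [gap_c|//] := gap_decide (open_box (~` c)); case: l_neq0.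
  by apply: le_meet_eq0 (le_trans l_gap gap_c) (leIr _ _) _; rewrite box_meet_dia.
by rewrite gap_p /dia -disj_leC gap_c0 eqxx.
Qed.

Lemma gap_atom : TD_algebra box -> atom gap.
Proof.
move=> box_TD; split; first by rewrite lt0x; apply/eqP; exact: gap_neq0.
move=> y y_gap; have [->|y_neq0] := classic (y = \bot); [by left | right].
have [A [A_lc A_lub]] := box_TD y.
have [z [Az z_neq0]] := lub_neq0 A_lub y_neq0.
have [y_ub _] := A_lub.
have z_gap : z = gap.
  exact: locally_closed_le_gap (A_lc z Az) z_neq0 (le_trans (y_ub z Az) y_gap).
by apply: le_anti; rewrite y_gap -z_gap y_ub.
Qed.

Lemma prime_filter_open_nbhd (F : M -> Prop) :
  prime_filter_OM box F -> F b -> ~ F a -> forall v, F v <-> open_nbhd gap v.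
Proof.
move=> [[F_open _ F_up F_meet] _ F_prime] Fb not_Fa v.
have [a_open b_open _ _] := ab_covered.
split=> [Fv|[v_open gap_v]].
  split; first exact: F_open.
  have [bv_a|] := covered_split (F_open v Fv); last exact: gap_le_of_split.
  by case: not_Fa; apply: F_up bv_a; [exact: F_meet | exact: a_open].
have bv_open : is_open box (b `&` v) by exact: openI.
have [bv_a|abv_b] := covered_split v_open.
  case: gap_neq0; have := gap_meet_eq0_of_le bv_a.
  by rewrite (meet_l gap_v).
have := F_prime _ _ a_open bv_open; rewrite abv_b => /(_ Fb)[//|Fbv].
by apply: F_up Fbv v_open (leIr _ _).
Qed.

End CoveringPair.

End MTAlgebra.

Theorem corollary5p6 (d : Order.disp_t) (M : ctbDistrLatticeType d)
  (box : M -> M) :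
  complete_lattice (M := M) -> MT_axioms box -> TD_algebra box ->
  homeomorphic (@at_open d M box) (@ptD_open d M box).
Proof.
move=> _ box_MT box_TD.
pose f (x : atomT) : ptD box :=
  exist _ (open_nbhd box (proj1_sig x))
    (slicing_open_nbhd box_MT box_TD (proj2_sig x)).
have f_inj : injective f.
  move=> [x x_atom] [y y_atom] /(f_equal (@proj1_sig _ _)) /= xy_nbhd.
  apply: eq_sig_hprop => [? ? ?|]; first exact: proof_irrelevance.
  exact: open_nbhd_inj xy_nbhd.
have f_surj : forall F, exists x, f x = F.
  move=> [F [F_prime [a [b [Fb not_Fa ab_covered]]]]].
  exists (exist _ _ (gap_atom box_MT ab_covered box_TD)).
  apply: eq_sig_hprop => [? ? ?|/=]; first exact: proof_irrelevance.
  apply: functional_extensionality => v; apply: propositional_extensionality.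
  exact: iff_sym (prime_filter_open_nbhd box_MT ab_covered F_prime Fb not_Fa v).
apply: (homeomorphic_basis (P := is_open box)
  (inX := fun u (x : atomT) => proj1_sig x <= u)
  (inY := fun u (F : ptD box) => proj1_sig F u)).
  exact: inj_surj_bijective f_inj f_surj.
by move=> u x u_open /=; split=> [[]|].
Qed.
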